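(* Let $A$ be a finite poset and let $k\in\mathbb N$ satisfy $2^k\ge|A|$. Define $B:=A/C_{2^k-1}$, $C:=B+C_{2^k}$, $D:=C/C_1$, and $\neg A:=D+A$ (with all constituent posets taken disjoint, in particular a fresh disjoint copy of $A$ in the last step). Then $g(\neg A)=0$ if $g(A)\ne0$, and $g(\neg A)=2^{k+1}$ if $g(A)=0$. In particular $\neg A$ is a $\forall$-game iff $A$ is an $\exists$-game.
   Context: For a finite poset $P$ and $x\in P$ let $P_x:=\{y\in P: x\not\le y\}$. The poset game on $P$: players alternately replace the current poset $Q$ by some $Q_x$; the first player unable to move loses; $P$ is an $\exists$-game if the first player wins, else a $\forall$-game. The g-number is $g(P):=\operatorname{mex}\{g(P_x):x\in P\}$ (mex = least natural number not in the set; $g(\emptyset)=0$), and $P$ is a $\forall$-game iff $g(P)=0$. $P+Q$ (parallel union) is the disjoint union with points of $P$ incomparable to points of $Q$; $P/Q$ (series union) is the disjoint union with every point of $P$ above every point of $Q$. $C_m$ is the chain with $m$ points ($C_0=\emptyset$). *)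

(* A finite poset is a finType T with a relation le : rel T
   (x <= y); the poset axioms are hypotheses of the theorem. *)
From mathcomp Require Import all_boot.
Set Implicit Arguments. Unset Strict Implicit. Unset Printing Implicit Defensive.

Definition mex (s : seq nat) : nat :=
  find (fun n => n \notin s) (iota 0 (size s).+1).

(* g-number of the subposet S (with the induced order), computed with fuel;
   a move at x replaces S by S minus the up-set of x, i.e. Q_x = {y in Q | ~ x <= y}. *)
Fixpoint gfuel (T : finType) (le : rel T) (n : nat) (S : {set T}) : nat :=
  match n with
  | 0 => 0
  | n.+1 => mex [seq gfuel le n (S :\: [set y | le x y]) | x <- enum S]
  end.

(* g(P) for the poset (T, le); fuel #|T| suffices since each move removes x. *)
Definition g (T : finType) (le : rel T) : nat := gfuel le #|T| [set: T].

Definition parallel (T1 T2 : Type) (r1 : rel T1) (r2 : rel T2) : rel (T1 + T2) :=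
  fun a b => match a, b with
  | inl x, inl y => r1 x y
  | inr x, inr y => r2 x y
  | _, _ => false
  end.

(* series union P / Q : every point of P (inl) above every point of Q (inr) *)
Definition series (T1 T2 : Type) (r1 : rel T1) (r2 : rel T2) : rel (T1 + T2) :=
  fun a b => match a, b with
  | inl x, inl y => r1 x y
  | inr x, inr y => r2 x y
  | inr _, inl _ => true
  | inl _, inr _ => false
  end.

Definition chain (m : nat) : rel 'I_m := fun i j => (i <= j)%N.
Arguments chain m : clear implicits.

Definition negA (T : finType) (le : rel T) (k : nat)
  : rel (((((T + ordinal (2 ^ k - 1)) + ordinal (2 ^ k)) + ordinal 1) + T)%type) :=
  parallel (series (parallel (series le (chain (2 ^ k - 1))) (chain (2 ^ k)))
                   (chain 1)) le.
Arguments negA {T} le k.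

(* Sprague-Grundy arithmetic for poset games: the g-number of a parallel union
   is the nim sum (bitwise xor) of the g-numbers, putting a chain C_m below P
   adds m to g(P), and g(C_m) = m.  Hence with a := g(A), which is at most
   |A| <= 2^k,
     g(not A) = (1 + ((2^k - 1 + a) xor 2^k)) xor a.
   For a = 0 the inner xor is 2^(k+1) - 1, giving 2^(k+1); for a > 0 it is a - 1,
   giving a xor a = 0. *)

From Stdlib Require Import Arith.
From mathcomp Require Import all_boot zify.

Set Implicit Arguments. Unset Strict Implicit. Unset Printing Implicit Defensive.

Lemma expn_pow m n : m ^ n = Nat.pow m n.
Proof. by elim: n => // n IHn; rewrite expnS IHn. Qed.

Lemma lxorK a b : Nat.lxor (Nat.lxor a b) b = a.
Proof. by rewrite Nat.lxor_assoc Nat.lxor_nilpotent Nat.lxor_0_r. Qed.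

Lemma lxorKl a b : Nat.lxor a (Nat.lxor a b) = b.
Proof. by rewrite -Nat.lxor_assoc Nat.lxor_nilpotent Nat.lxor_0_l. Qed.

Lemma lxorIl b : injective (Nat.lxor^~ b).
Proof. exact: (can_inj (g := Nat.lxor^~ b) (lxorK^~ b)). Qed.

Lemma lxorIr a : injective (Nat.lxor a).
Proof. exact: (can_inj (g := Nat.lxor a) (lxorKl a)). Qed.

(* Two numbers compare like their bits at the highest position where they differ. *)
Lemma ltn_lxor_log2 x y :
  x != y -> Nat.testbit y (Nat.log2 (Nat.lxor x y)) -> x < y.
Proof.
set h := Nat.log2 _ => neq_xy yh.
have xy0 : Nat.lxor x y <> 0 by move/Nat.lxor_eq/eqP; rewrite (negbTE neq_xy).
have xh : Nat.testbit x h = false.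
  by move: (Nat.bit_log2 _ xy0); rewrite Nat.lxor_spec yh; case: Nat.testbit.
have high : x / Nat.pow 2 h / 2 = y / Nat.pow 2 h / 2.
  rewrite !Nat.Div0.div_div [(_ * 2)%coq_nat]Nat.mul_comm -Nat.pow_succ_r'.
  rewrite -!Nat.shiftr_div_pow2.
  apply: Nat.bits_inj => i; rewrite !Nat.shiftr_spec'.
  have := Nat.bits_above_log2 (Nat.lxor x y) (i + h.+1) ltac:(rewrite /h; lia).
  by rewrite Nat.lxor_spec; do 2 case: Nat.testbit.
have := Nat.testbit_spec' x h; have := Nat.testbit_spec' y h.
rewrite xh yh; cbn [Nat.b2n] => ey ex.
have dx := Nat.div_mod_eq (x / Nat.pow 2 h) 2.
have dy := Nat.div_mod_eq (y / Nat.pow 2 h) 2.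
by rewrite ltnNge; apply/negP => /leP/(Nat.Div0.div_le_mono _ _ (Nat.pow 2 h)); lia.
Qed.

(* The mex property of the nim sum: every smaller value is reached by lowering one summand. *)
Lemma lxor_ltn_cases a b c :
  c < Nat.lxor a b -> (Nat.lxor c b < a) || (Nat.lxor a c < b).
Proof.
move=> lt_c; set d := Nat.lxor (Nat.lxor a b) c.
have d0 : d <> 0 by move/Nat.lxor_eq=> E; move: lt_c; rewrite E ltnn.
have dh := Nat.bit_log2 _ d0; set h := Nat.log2 d in dh.
have ltd x y : Nat.lxor x y = d -> Nat.testbit y h -> x < y.
  move=> xyd yh; apply: ltn_lxor_log2; last by rewrite xyd.
  by apply/eqP=> exy; apply: d0; rewrite -xyd exy Nat.lxor_nilpotent.
move: dh; rewrite /d !Nat.lxor_spec.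
case ah: (Nat.testbit a h); case bh: (Nat.testbit b h) => //= ch.
- by have := ltn_trans lt_c (ltd _ _ erefl ch); rewrite ltnn.
- apply/orP; left; apply: ltd ah.
  by rewrite /d Nat.lxor_comm Nat.lxor_assoc [Nat.lxor b c]Nat.lxor_comm.
- apply/orP; right; apply: ltd bh.
  by rewrite /d !Nat.lxor_assoc [Nat.lxor b c]Nat.lxor_comm.
- by have := ltn_trans lt_c (ltd _ _ erefl ch); rewrite ltnn.
Qed.

Lemma lxor_pow2 r k : r < 2 ^ k -> Nat.lxor r (2 ^ k) = r + 2 ^ k.
Proof.
move=> /ltP; rewrite expn_pow => lt_r.
rewrite -Nat.add_nocarry_lxor; first lia.
apply: Nat.bits_inj_0 => i; rewrite Nat.land_spec Nat.pow2_bits_eqb.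
case: (Nat.eqb_spec k i) => [<-|_]; last exact: andbF.
have [->|r0] := Nat.eq_dec r 0; first by rewrite Nat.bits_0.
by rewrite Nat.bits_above_log2 //; apply/Nat.log2_lt_pow2; lia.
Qed.

Lemma lxor_negA_value k a : a <= 2 ^ k ->
  Nat.lxor (1 + Nat.lxor (2 ^ k - 1 + a) (2 ^ k)) a = if a == 0 then 2 ^ k.+1 else 0.
Proof.
have pk := expn_gt0 2 k; rewrite expnS.
case: eqP => [-> _ | /eqP a0 le_ak].
  by rewrite addn0 lxor_pow2 ?Nat.lxor_0_r; lia.
have -> : 2 ^ k - 1 + a = a.-1 + 2 ^ k by lia.
by rewrite -lxor_pow2 ?lxorK ?add1n ?prednK ?lt0n ?Nat.lxor_nilpotent //; lia.
Qed.

Lemma has_notin_iota_size s : has (fun n => n \notin s) (iota 0 (size s).+1).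
Proof.
apply/negPn/negP=> /hasPn all_in.
have sub : {subset iota 0 (size s).+1 <= s} by move=> n /all_in; rewrite negbK.
by have := uniq_leq_size (iota_uniq 0 _) sub; rewrite size_iota ltnn.
Qed.

Lemma mex_notin s : mex s \notin s.
Proof.
have has_s := has_notin_iota_size s.
have := nth_find 0 has_s; rewrite nth_iota ?add0n //.
by move: has_s; rewrite has_find size_iota.
Qed.

Lemma mem_mex_lt s m : m < mex s -> m \in s.
Proof.
move=> lt_m; have := before_find 0 lt_m.
rewrite nth_iota ?add0n => [/negbFE //|].
by apply: leq_trans lt_m _; rewrite -[X in _ <= X](size_iota 0 (size s).+1) find_size.
Qed.

Lemma mex_le_size s : mex s <= size s.
Proof. by have := has_notin_iota_size s; rewrite has_find size_iota ltnS. Qed.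

Lemma mex_eq s n : n \notin s -> {in gtn n, forall m, m \in s} -> mex s = n.
Proof.
move=> n_notin lt_in; case: (ltngtP (mex s) n) => // lt_mex.
  by have := mex_notin s; rewrite lt_in.
by move: n_notin; rewrite mem_mex_lt.
Qed.

Section GrundyValue.
Variables (T : finType) (le : rel T).
Implicit Types S : {set T}.

Definition residual (S : {set T}) (x : T) : {set T} := S :\: [set y | le x y].

Definition gval (S : {set T}) : nat := gfuel le #|S| S.

Definition grundy (f : {set T} -> nat) : Prop :=
  (forall S x, x \in S -> f (residual S x) != f S) /\
  (forall S m, m < f S -> exists2 x, x \in S & f (residual S x) = m).

Lemma gval0 : gval set0 = 0.
Proof. by rewrite /gval cards0. Qed.

Lemma g_gval : g le = gval [set: T].
Proof. by rewrite /g /gval cardsT. Qed.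

Hypothesis le_refl : reflexive le.

Lemma card_residual S x : x \in S -> #|residual S x| < #|S|.
Proof.
move=> xS; rewrite (cardsD1 x S) xS add1n ltnS subset_leq_card //.
apply/subsetP=> y; rewrite !inE => /andP[nle_xy ->].
by case: eqP nle_xy => // <-; rewrite le_refl.
Qed.

Lemma gfuel_enough n m S : #|S| <= n -> #|S| <= m -> gfuel le n S = gfuel le m S.
Proof.
elim: n m S => [|n IHn] [|m] S //= le_Sn le_Sm.
  1,2: by rewrite (_ : enum S = [::]) //; apply/nilP; rewrite /nilp -cardE; lia.
congr mex; apply/eq_in_map => x; rewrite mem_enum => xS.
by have := card_residual xS; rewrite /residual => lt_S; apply: IHn; lia.
Qed.

Lemma gval_rec S : gval S = mex [seq gval (residual S x) | x <- enum S].
Proof.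
rewrite /gval (@gfuel_enough _ #|S|.+1) //=.
congr mex; apply/eq_in_map => x; rewrite mem_enum => xS.
by apply: gfuel_enough => //; apply/ltnW/card_residual.
Qed.

Lemma gval_le_card S : gval S <= #|S|.
Proof. by rewrite gval_rec cardE; apply: leq_trans (mex_le_size _) _; rewrite size_map. Qed.

Lemma grundy_gval : grundy gval.
Proof.
split=> [S x xS | S m].
  have := mex_notin [seq gval (residual S y) | y <- enum S]; rewrite -gval_rec.
  by apply: contraNneq => <-; apply: map_f; rewrite mem_enum.
rewrite {1}gval_rec => /mem_mex_lt/mapP[x]; rewrite mem_enum => xS ->; by exists x.
Qed.

Lemma grundy_gvalE f : grundy f -> gval =1 f.
Proof.
move=> [f_neq f_reach] S; have [n] := ubnP #|S|.
elim: n S => // n IHn S; rewrite ltnS => le_Sn.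
rewrite gval_rec; apply: mex_eq => [|m /f_reach[x xS <-]].
  apply/mapP=> -[x]; rewrite mem_enum => xS; rewrite IHn.
    by move/esym/eqP; apply/negP/f_neq.
  exact: leq_trans (card_residual xS) le_Sn.
apply/mapP; exists x; rewrite ?mem_enum // IHn //.
exact: leq_trans (card_residual xS) le_Sn.
Qed.

End GrundyValue.

Definition lpart (T1 T2 : finType) (S : {set T1 + T2}) : {set T1} := [set x | inl x \in S].
Definition rpart (T1 T2 : finType) (S : {set T1 + T2}) : {set T2} := [set y | inr y \in S].

Lemma lpartT (T1 T2 : finType) : lpart [set: T1 + T2] = [set: T1].
Proof. by apply/setP=> x; rewrite !inE. Qed.

Lemma rpartT (T1 T2 : finType) : rpart [set: T1 + T2] = [set: T2].
Proof. by apply/setP=> x; rewrite !inE. Qed.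

Lemma chain_refl n : reflexive (chain n).
Proof. exact: leqnn. Qed.

Lemma parallel_refl (T1 T2 : finType) (r1 : rel T1) (r2 : rel T2) :
  reflexive r1 -> reflexive r2 -> reflexive (parallel r1 r2).
Proof. by move=> refl1 refl2 []. Qed.

Lemma series_refl (T1 T2 : finType) (r1 : rel T1) (r2 : rel T2) :
  reflexive r1 -> reflexive r2 -> reflexive (series r1 r2).
Proof. by move=> refl1 refl2 []. Qed.

Lemma exists_chain_residual_card n (S : {set 'I_n}) m :
  m < #|S| -> exists2 x, x \in S & #|residual (chain n) S x| = m.
Proof.
have [N] := ubnP #|S|; elim: N S m => // N IHN S m; rewrite ltnS => le_SN lt_mS.
have [x0 x0S] : exists x0, x0 \in S by apply/card_gt0P; apply: leq_ltn_trans lt_mS.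
case: (arg_maxnP (fun i : 'I_n => val i) x0S) => M MS maxM.
have {}MS : M \in S := MS.
have cardSM : #|S| = #|S :\ M|.+1 by rewrite (cardsD1 M S) MS.
have resM : residual (chain n) S M = S :\ M.
  apply/setP=> y; rewrite !inE /chain; case yS: (y \in S); rewrite ?andbF ?andbT //.
  by have := maxM y yS; rewrite -val_eqE /=; lia.
move: lt_mS; rewrite cardSM ltnS leq_eqVlt => /predU1P[-> | lt_m].
  by exists M; rewrite ?resM.
have [|x] := IHN (S :\ M) m _ lt_m; first by rewrite cardSM in le_SN.
rewrite !inE => /andP[xM xS] <-; exists x => //.
apply: eq_card => y; rewrite !inE /chain; case: eqP => [-> | _] //=.
by move: (maxM x xS) => /= ->.
Qed.

Lemma gval_chain n S : gval (chain n) S = #|S|.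
Proof.
apply: (grundy_gvalE (@chain_refl n) (f := fun S => #|S|) _ S).
split=> [S' x xS | S' m].
  by rewrite neq_ltn card_residual //; apply: chain_refl.
exact: exists_chain_residual_card.
Qed.

Section SumsOfPosets.
Variables (T1 T2 : finType) (r1 : rel T1) (r2 : rel T2).
Hypotheses (r1_refl : reflexive r1) (r2_refl : reflexive r2).
Implicit Types S : {set T1 + T2}.

Lemma gval_parallel S :
  gval (parallel r1 r2) S = Nat.lxor (gval r1 (lpart S)) (gval r2 (rpart S)).
Proof.
have [neq1 reach1] := grundy_gval r1_refl; have [neq2 reach2] := grundy_gval r2_refl.
have residual_inl S' x :
    lpart (residual (parallel r1 r2) S' (inl x)) = residual r1 (lpart S') x /\
    rpart (residual (parallel r1 r2) S' (inl x)) = rpart S'.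
  by split; apply/setP=> y; rewrite !inE.
have residual_inr S' y :
    lpart (residual (parallel r1 r2) S' (inr y)) = lpart S' /\
    rpart (residual (parallel r1 r2) S' (inr y)) = residual r2 (rpart S') y.
  by split; apply/setP=> z; rewrite !inE.
apply: (grundy_gvalE (parallel_refl r1_refl r2_refl)
    (f := fun S => Nat.lxor (gval r1 (lpart S)) (gval r2 (rpart S))) _ S).
split=> [S' [x|y] xS | S' m].
- have [-> ->] := residual_inl S' x; apply: contra_neq (@lxorIl _ _ _) _.
  by apply: neq1; rewrite inE.
- have [-> ->] := residual_inr S' y; apply: contra_neq (@lxorIr _ _ _) _.
  by apply: neq2; rewrite inE.
case/lxor_ltn_cases/orP=> [/reach1[x xS val_x] | /reach2[y yS val_y]].
  exists (inl x); first by rewrite inE in xS.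
  by have [-> ->] := residual_inl S' x; rewrite val_x lxorK.
exists (inr y); first by rewrite inE in yS.
by have [-> ->] := residual_inr S' y; rewrite val_y lxorKl.
Qed.

End SumsOfPosets.

Section SeriesWithChain.
Variables (T : finType) (r : rel T) (n : nat).
Hypothesis r_refl : reflexive r.
Implicit Types S : {set T + 'I_n}.

Lemma gval_series_chain S :
  gval (series r (chain n)) S = #|rpart S| + gval r (lpart S).
Proof.
have [neq reach] := grundy_gval r_refl.
have residual_inl S' x :
    lpart (residual (series r (chain n)) S' (inl x)) = residual r (lpart S') x /\
    rpart (residual (series r (chain n)) S' (inl x)) = rpart S'.
  by split; apply/setP=> y; rewrite !inE.
have residual_inr S' y :
    lpart (residual (series r (chain n)) S' (inr y)) = set0 /\
    rpart (residual (series r (chain n)) S' (inr y)) = residual (chain n) (rpart S') y.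
  by split; apply/setP=> z; rewrite !inE.
apply: (grundy_gvalE (series_refl r_refl (@chain_refl n))
    (f := fun S => #|rpart S| + gval r (lpart S)) _ S).
split=> [S' [x|y] xS | S' m lt_m].
- have [-> ->] := residual_inl S' x; rewrite eqn_add2l.
  by apply: neq; rewrite inE.
- have [-> ->] := residual_inr S' y; rewrite gval0 addn0 neq_ltn.
  by rewrite (leq_trans (card_residual (@chain_refl n) _)) ?leq_addr ?inE.
have [lt_mR | le_Rm] := ltnP m #|rpart S'|.
  have [y yS card_y] := exists_chain_residual_card lt_mR.
  exists (inr y); first by rewrite inE in yS.
  by have [-> ->] := residual_inr S' y; rewrite gval0 addn0.
have [x xS val_x] :
    exists2 x, x \in lpart S' & gval r (residual r (lpart S') x) = m - #|rpart S'|.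
  by apply: reach; rewrite ltn_subLR // addnC.
exists (inl x); first by rewrite inE in xS.
by have [-> ->] := residual_inl S' x; rewrite val_x subnKC.
Qed.

End SeriesWithChain.

Lemma g_parallel (T1 T2 : finType) (r1 : rel T1) (r2 : rel T2) :
  reflexive r1 -> reflexive r2 -> g (parallel r1 r2) = Nat.lxor (g r1) (g r2).
Proof. by move=> refl1 refl2; rewrite !g_gval gval_parallel // lpartT rpartT. Qed.

Lemma g_series_chain (T : finType) (r : rel T) n :
  reflexive r -> g (series r (chain n)) = n + g r.
Proof.
by move=> refl; rewrite !g_gval gval_series_chain // lpartT rpartT cardsT card_ord.
Qed.

Lemma g_chain n : g (chain n) = n.
Proof. by rewrite g_gval gval_chain cardsT card_ord. Qed.

Lemma g_negA (T : finType) (le : rel T) k : reflexive le ->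
  g (negA le k) = Nat.lxor (1 + Nat.lxor (2 ^ k - 1 + g le) (2 ^ k)) (g le).
Proof.
move=> le_refl; have refl_B := series_refl le_refl (@chain_refl (2 ^ k - 1)).
have refl_C := parallel_refl refl_B (@chain_refl (2 ^ k)).
have refl_D := series_refl refl_C (@chain_refl 1).
by rewrite /negA (g_parallel refl_D le_refl) (g_series_chain _ refl_C)
  (g_parallel refl_B (@chain_refl _)) (g_series_chain _ le_refl) g_chain.
Qed.

Theorem mainTheorem7 (T : finType) (le : rel T)
  (le_refl : reflexive le) (le_anti : antisymmetric le) (le_trans : transitive le)
  (k : nat) (hk : #|T| <= 2 ^ k) :
  (g le != 0 -> g (negA le k) = 0) /\
  (g le = 0 -> g (negA le k) = 2 ^ k.+1) /\
  ((g (negA le k) == 0) = (g le != 0)).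
Proof.
have g_le_2k : g le <= 2 ^ k.
  by rewrite g_gval; apply: leq_trans (gval_le_card le_refl _) _; rewrite cardsT.
rewrite g_negA // lxor_negA_value //.
by case: eqP => [-> | nz]; do !split => //; rewrite expn_eq0.
Qed.
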